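(* Let $L=(G,l)$ be a linkage whose underlying graph $G$ is series parallel. Then $L$ is realisable if and only if for every subgraph $H$ of $G$ that is a polygonal graph, the linkage $(H,l|_H)$ is realisable.
   Context: A graph has a finite vertex set and a finite multiset of edges, each an unordered pair of distinct vertices (parallel edges allowed, no loops). A polygonal graph is a graph isomorphic to the graph with vertex set $\{1,\dots,n\}$ ($n\ge2$) and edge multiset $\{\{i,i+1\}:1\le i\le n-1\}\cup\{\{n,1\}\}$ (for $n=2$ this is two parallel edges). A linkage is $L=(G,l)$ with $l:E\to\mathbb R_{\ge0}$; it is realisable if there exists $p:V\to\mathbb R^2$ with $|p(u)-p(v)|=l(\{u,v\})$ for every edge $\{u,v\}$. A TTG is $(G,s,t)$ with $s\ne t$; series composition $(G_1,s_1,t_1)\circ(G_2,s_2,t_2)=(G_1\cup_{t_2\sim s_1}G_2,s_2,t_1)$; parallel composition $(G_1,s_1,t_1)\|(G_2,s_2,t_2)=(G_1\cup_{s_1\sim s_2,t_1\sim t_2}G_2,s_1,t_1)$. TTSPGs are the smallest class of TTGs containing a single edge $(K_2,s,t)$ and closed under both compositions; $G$ is series parallel if $(G,s,t)$ is a TTSPG for some $s,t$. *)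

From Stdlib Require Import Reals.
From mathcomp Require Import all_boot.

Set Implicit Arguments.
Unset Strict Implicit.
Unset Printing Implicit Defensive.

(* A graph: finite vertex type, finite edge type (so parallel edges are
   allowed), and for each edge its (ordered representation of the unordered)
   pair of endpoints. *)
Record graph := Graph {
  gV : finType;
  gE : finType;
  gends : gE -> gV * gV }.

Definition loopless (G : graph) : Prop :=
  forall e : gE G, (gends e).1 <> (gends e).2.

Definition graph_iso (G H : graph) : Prop :=
  exists (fV : gV G -> gV H) (fE : gE G -> gE H),
    bijective fV /\ bijective fE /\
    forall e : gE G,
      gends (fE e) = (fV (gends e).1, fV (gends e).2) \/
      gends (fE e) = (fV (gends e).2, fV (gends e).1).

(* the cycle on n+2 vertices 0..n+1, edges {i, i+1 mod (n+2)};
   for n = 0 this is two parallel edges between 0 and 1. *)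
Definition cycle_graph (n : nat) : graph :=
  @Graph 'I_n.+2 'I_n.+2 (fun i => (i, ordS i)).

Definition polygonal (G : graph) : Prop :=
  exists n : nat, graph_iso (cycle_graph n) G.

Definition is_subgraph (G : graph) (VS : {set gV G}) (ES : {set gE G}) : Prop :=
  forall e : gE G, e \in ES -> (gends e).1 \in VS /\ (gends e).2 \in VS.

Definition subgraph (G : graph) (VS : {set gV G}) (ES : {set gE G})
  (h : is_subgraph VS ES) : graph :=
  @Graph {v : gV G | v \in VS} {e : gE G | e \in ES}
    (fun e => (exist (fun v => v \in VS) (gends (sval e)).1
                     (proj1 (h (sval e) (proj2_sig e))),
               exist (fun v => v \in VS) (gends (sval e)).2
                     (proj2 (h (sval e) (proj2_sig e))))).

Definition R2 := (R * R)%type.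

Definition dist2 (p q : R2) : R :=
  sqrt (Rsqr (fst p - fst q) + Rsqr (snd p - snd q)).

Definition realisable (G : graph) (l : gE G -> R) : Prop :=
  exists p : gV G -> R2,
    forall e : gE G, dist2 (p (gends e).1) (p (gends e).2) = l e.

(* Concrete two-terminal graphs: vertices 0..nv-1, list of edges, terminals. *)
Record ctg := CTG { nv : nat; cedges : seq (nat * nat); src : nat; snk : nat }.

Definition map_edges (f : nat -> nat) (s : seq (nat * nat)) :=
  [seq (f x.1, f x.2) | x <- s].

Definition K2 : ctg := CTG 2 [:: (0, 1)] 0 1.

(* series composition (G1,s1,t1) o (G2,s2,t2) = (G1 U_{t2 ~ s1} G2, s2, t1).
   G2 keeps labels 0..n2-1; vertex v of G1 becomes t2 if v = s1 and is
   otherwise relabelled into n2 .. n1+n2-2. *)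
Definition ser (G1 G2 : ctg) : ctg :=
  let f1 v := if v == src G1 then snk G2
              else if v < src G1 then nv G2 + v else nv G2 + v - 1 in
  CTG (nv G1 + nv G2 - 1)
      (map_edges f1 (cedges G1) ++ cedges G2)
      (src G2) (f1 (snk G1)).

(* parallel composition (G1,s1,t1) || (G2,s2,t2)
   = (G1 U_{s1 ~ s2, t1 ~ t2} G2, s1, t1).
   G1 keeps its labels; other vertices of G2 are relabelled into
   n1 .. n1+n2-3. *)
Definition par (G1 G2 : ctg) : ctg :=
  let f2 v := if v == src G2 then src G1
              else if v == snk G2 then snk G1
              else nv G1 + v - (src G2 < v) - (snk G2 < v) in
  CTG (nv G1 + nv G2 - 2)
      (cedges G1 ++ map_edges f2 (cedges G2))
      (src G1) (snk G1).

Inductive spterm := SPedge | SPser of spterm & spterm | SPpar of spterm & spterm.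

Fixpoint sp_interp (T : spterm) : ctg :=
  match T with
  | SPedge => K2
  | SPser A B => ser (sp_interp A) (sp_interp B)
  | SPpar A B => par (sp_interp A) (sp_interp B)
  end.

Definition ttg_iso (c : ctg) (G : graph) (s t : gV G) : Prop :=
  exists (fV : nat -> gV G) (fE : 'I_(size (cedges c)) -> gE G),
    (forall k1 k2, k1 < nv c -> k2 < nv c -> fV k1 = fV k2 -> k1 = k2) /\
    (forall v : gV G, exists2 k, k < nv c & fV k = v) /\
    bijective fE /\
    (forall i : 'I_(size (cedges c)),
       let ab := nth (0, 0) (cedges c) i in
       gends (fE i) = (fV ab.1, fV ab.2) \/
       gends (fE i) = (fV ab.2, fV ab.1)) /\
    fV (src c) = s /\ fV (snk c) = t.

Definition TTSPG (G : graph) (s t : gV G) : Prop :=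
  s <> t /\ exists T : spterm, @ttg_iso (sp_interp T) G s t.

Definition series_parallel (G : graph) : Prop :=
  exists s t : gV G, @TTSPG G s t.

(* For edge lengths [L],
   the possible distances between the terminals of a realisation form an interval
   [[dmin, dmax]]: in a series composition the two terminal distances of the parts
   and that of the whole are the sides of a triangle, in a parallel composition the
   two intervals are intersected.  When no intersection is empty ([feasible]),
   every distance in the interval is attained, by gluing realisations of the parts
   with rigid motions.  Otherwise some parallel composition has [dmax A < dmin B];
   a shortest terminal path of [A] and a path of [B] in which one edge exceeds the
   rest of the path by [dmin B] close up to a cycle with one edge longer than all
   the others together, a polygonal subgraph forbidden by the polygon inequality. *)

From Stdlib Require Import Reals Lra Lia Rgeom Classical_Prop.
From mathcomp Require Import all_boot zify.

Set Implicit Arguments.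
Unset Strict Implicit.
Unset Printing Implicit Defensive.

Section PlaneGeometry.
Local Open Scope R_scope.

Lemma dist2_sym p q : dist2 p q = dist2 q p.
Proof. by rewrite /dist2 (Rsqr_neg_minus p.1) (Rsqr_neg_minus p.2). Qed.

Lemma dist2_refl p : dist2 p p = 0.
Proof. exact: (distance_refl p.1 p.2). Qed.

Lemma dist2_triangle p q r : dist2 p q <= dist2 p r + dist2 r q.
Proof. exact: (triangle p.1 p.2 q.1 q.2 r.1 r.2). Qed.

Lemma dist2_on_axis x : 0 <= x -> dist2 (0, 0) (x, 0) = x.
Proof.
move=> x_ge0; rewrite /dist2 /= Rminus_0_l Rminus_diag Rsqr_0 Rplus_0_r -Rsqr_neg.
exact: sqrt_Rsqr.
Qed.

Definition isometry (f : R2 -> R2) := forall x y, dist2 (f x) (f y) = dist2 x y.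

Definition rigid_motion (c s : R) (b a : R2) (x : R2) : R2 :=
  (a.1 + (c * (x.1 - b.1) - s * (x.2 - b.2)), a.2 + (s * (x.1 - b.1) + c * (x.2 - b.2))).

Lemma rigid_motion_isometry c s b a : c * c + s * s = 1 -> isometry (rigid_motion c s b a).
Proof.
move=> cs1 [x1 x2] [y1 y2]; rewrite /dist2 /=; congr sqrt; rewrite /Rsqr.
transitivity ((c * c + s * s) * ((x1 - y1) * (x1 - y1) + (x2 - y2) * (x2 - y2))); first ring.
by rewrite cs1; ring.
Qed.

Lemma isometry_of_eq_dist P1 P2 Q1 Q2 : dist2 P1 P2 = dist2 Q1 Q2 ->
  exists f, isometry f /\ f P1 = Q1 /\ f P2 = Q2.
Proof.
case: P1 P2 Q1 Q2 => [a b] [c d] [e g] [h k]; rewrite /dist2 /= => E.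
set ux := c - a; set uy := d - b; set wx := h - e; set wy := k - g.
have Ew : wx * wx + wy * wy = ux * ux + uy * uy.
{ have := f_equal Rsqr E; rewrite !Rsqr_sqrt /Rsqr;
    try (apply: Rplus_le_le_0_compat; apply: Rle_0_sqr).
  move=> E2; rewrite /ux /uy /wx /wy.
  transitivity ((e - h) * (e - h) + (g - k) * (g - k)); first ring.
  by rewrite -E2; ring. }
case: (Req_dec (ux * ux + uy * uy) 0) => [u0|u_neq0].
- have [ux0 uy0] : ux = 0 /\ uy = 0 by nra.
  have [wx0 wy0] : wx = 0 /\ wy = 0 by nra.
  exists (rigid_motion 1 0 (a, b) (e, g)); split; first by apply: rigid_motion_isometry; ring.
  by rewrite /rigid_motion /=; split; congr pair; rewrite /ux /uy /wx /wy in ux0 uy0 wx0 wy0; lra.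
- set r := ux * ux + uy * uy in Ew u_neq0.
  (* [(cc, ss)] is the rotation taking the vector [u] to the vector [w] of the same length. *)
  set cc := (ux * wx + uy * wy) / r; set ss := (ux * wy - uy * wx) / r.
  have cs1 : cc * cc + ss * ss = 1.
  { rewrite /cc /ss; field_simplify; last exact: u_neq0.
    transitivity (r * (wx * wx + wy * wy) / r ^ 2); first by rewrite /r; field.
    by rewrite Ew -/r; field. }
  exists (rigid_motion cc ss (a, b) (e, g)); split; first exact: rigid_motion_isometry.
  rewrite /rigid_motion /= !Rminus_diag !Rmult_0_r; split; first by congr pair; ring.
  have -> : cc * ux - ss * uy = wx by rewrite /cc /ss; field_simplify; [rewrite /r; field|].
  have -> : ss * ux + cc * uy = wy by rewrite /cc /ss; field_simplify; [rewrite /r; field|].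
  by congr pair; rewrite /wx /wy; ring.
Qed.

Lemma triangle_apex a b c : 0 <= a -> 0 <= b -> 0 <= c ->
  a <= b + c -> b <= a + c -> c <= a + b ->
  exists Y, dist2 (0, 0) Y = b /\ dist2 Y (c, 0) = a.
Proof.
move=> a_ge0 b_ge0 c_ge0 abc bac cab.
case: (Req_dec c 0) => [c0|c_neq0].
  exists (b, 0); rewrite dist2_on_axis // dist2_sym c0 dist2_on_axis //; split => //; lra.
pose x := (b * b - a * a + c * c) / (2 * c).
have hx_ge0 : 0 <= b * b - x * x.
{ have -> : b * b - x * x = (a - b + c) * (a + b - c) * ((b + c - a) * (b + c + a)) / (4 * (c * c)).
    by rewrite /x; field.
  apply: Rmult_le_pos; first by apply: Rmult_le_pos; apply: Rmult_le_pos; lra.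
  by apply/Rlt_le/Rinv_0_lt_compat; nra. }
have sq := sqrt_sqrt _ hx_ge0.
exists (x, sqrt (b * b - x * x)); rewrite /dist2 /=; split.
- rewrite -[X in _ = X](sqrt_Rsqr b) //; congr sqrt; rewrite /Rsqr; nra.
- rewrite -[X in _ = X](sqrt_Rsqr a) //; congr sqrt; rewrite /Rsqr.
  rewrite Rminus_0_r sq /x; field; exact: c_neq0.
Qed.

Fixpoint rsum (f : nat -> R) (k : nat) : R :=
  if k is k'.+1 then rsum f k' + f k' else 0.

Lemma eq_rsum f g k : (forall i, (i < k)%N -> f i = g i) -> rsum f k = rsum g k.
Proof. by elim: k => //= k IH fg; rewrite IH ?fg // => i /ltnW; apply: fg. Qed.

Lemma rsum_add f a b : rsum f (a + b) = rsum f a + rsum (fun i => f (i + a)%N) b.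
Proof.
elim: b => [|b IH] /=; first by rewrite addn0 Rplus_0_r.
by rewrite addnS /= IH addnC Rplus_assoc.
Qed.

Lemma rsum_recl f k : rsum f k.+1 = f 0%N + rsum (fun i => f i.+1) k.
Proof.
elim: k => [|k IH]; first by rewrite /=; ring.
by rewrite (_ : rsum f k.+2 = rsum f k.+1 + f k.+1) // IH /=; ring.
Qed.

Lemma rsum_rev f k : rsum (fun i => f (k.-1 - i)%N) k = rsum f k.
Proof.
elim: k f => // k IH f; rewrite rsum_recl /=.
rewrite -IH subn0 Rplus_comm; congr (_ + _).
by apply: eq_rsum => i ik; congr f; lia.
Qed.

Lemma dist2_polyline (y : nat -> R2) a k :
  dist2 (y a) (y (a + k)%N) <= rsum (fun i => dist2 (y (i + a)%N) (y (i + a).+1)) k.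
Proof.
elim: k => [|k IH] /=; first by rewrite addn0 dist2_refl; lra.
apply: Rle_trans (dist2_triangle _ _ (y (a + k)%N)) _.
by rewrite addnS (addnC k a); lra.
Qed.

Lemma closed_polyline_side (y : nat -> R2) m j : y m = y 0%N -> (j < m)%N ->
  2 * dist2 (y j) (y j.+1) <= rsum (fun i => dist2 (y i) (y i.+1)) m.
Proof.
move=> ym jm.
have before := dist2_polyline y 0 j.
rewrite add0n (eq_rsum (g := fun i => dist2 (y i) (y i.+1))) in before; last first.
  by move=> i _; rewrite addn0.
have after := dist2_polyline y j.+1 (m - j.+1).
rewrite subnKC // ym in after.
have := dist2_triangle (y j) (y j.+1) (y 0%N).
rewrite -(subnKC jm) rsum_add /= (dist2_sym (y j) (y 0%N)) (dist2_sym (y 0%N) (y j.+1)); lra.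
Qed.

End PlaneGeometry.

Definition ends (c : ctg) i := nth (0, 0) (cedges c) i.
Definition nedges (c : ctg) := size (cedges c).

Definition ser_relabel (c1 c2 : ctg) v :=
  if v == src c1 then snk c2 else if v < src c1 then nv c2 + v else nv c2 + v - 1.
Definition par_relabel (c1 c2 : ctg) v :=
  if v == src c2 then src c1 else if v == snk c2 then snk c1
  else nv c1 + v - (src c2 < v) - (snk c2 < v).

Lemma nedges_ser c1 c2 : nedges (ser c1 c2) = nedges c1 + nedges c2.
Proof. by rewrite /nedges /= size_cat size_map. Qed.

Lemma nedges_par c1 c2 : nedges (par c1 c2) = nedges c1 + nedges c2.
Proof. by rewrite /nedges /= size_cat size_map. Qed.

Lemma ends_ser c1 c2 i : ends (ser c1 c2) i =
  if i < nedges c1 then (ser_relabel c1 c2 (ends c1 i).1, ser_relabel c1 c2 (ends c1 i).2)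
  else ends c2 (i - nedges c1).
Proof. by rewrite /ends /= nth_cat size_map; case: ifP => // i_lt; rewrite (nth_map (0, 0)). Qed.

Lemma ends_par c1 c2 i : i < nedges c1 + nedges c2 -> ends (par c1 c2) i =
  if i < nedges c1 then ends c1 i
  else (par_relabel c1 c2 (ends c2 (i - nedges c1)).1,
        par_relabel c1 c2 (ends c2 (i - nedges c1)).2).
Proof.
rewrite /ends /= nth_cat => i_lt; case: ifP => // i_ge.
by rewrite (nth_map (0, 0)) //; rewrite /nedges in i_lt i_ge; lia.
Qed.

Lemma snk_ser c1 c2 : snk (ser c1 c2) = ser_relabel c1 c2 (snk c1).
Proof. by []. Qed.

Definition wf_ctg (c : ctg) :=
  [/\ src c = 0, 0 < snk c < nv c, 0 < nedges c &
      forall i, i < nedges c -> (ends c i).1 < nv c /\ (ends c i).2 < nv c].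

Section Relabel.
Variables c1 c2 : ctg.
Hypotheses (wf1 : wf_ctg c1) (wf2 : wf_ctg c2).

Lemma ser_relabelE v : ser_relabel c1 c2 v = if v == 0 then snk c2 else nv c2 + v - 1.
Proof. by case: wf1 => s1 _ _ _; rewrite /ser_relabel s1; case: (v == 0). Qed.

Lemma par_relabelE v : par_relabel c1 c2 v =
  if v == 0 then 0 else if v == snk c2 then snk c1 else nv c1 + v - 1 - (snk c2 < v).
Proof.
case: wf1 wf2 => s1 _ _ _ [s2 _ _ _].
by rewrite /par_relabel s1 s2; case: eqP => // /eqP v0; rewrite lt0n v0.
Qed.

Lemma ser_relabel_src : ser_relabel c1 c2 0 = snk c2.
Proof. by rewrite ser_relabelE. Qed.

Lemma par_relabel_src : par_relabel c1 c2 0 = 0.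
Proof. by rewrite par_relabelE. Qed.

Lemma par_relabel_snk : par_relabel c1 c2 (snk c2) = snk c1.
Proof. by case: wf2 => _ /andP[t2 _] _ _; rewrite par_relabelE eqxx; case: eqP => // t0; lia. Qed.

Lemma ser_relabel_lt v : ser_relabel c1 c2 v < nv c2 -> v = 0.
Proof. by rewrite ser_relabelE; case: eqP => // _; lia. Qed.

Lemma par_relabel_lt v : v < nv c2 -> par_relabel c1 c2 v < nv c1 ->
  (v = 0 /\ par_relabel c1 c2 v = 0) \/ (v = snk c2 /\ par_relabel c1 c2 v = snk c1).
Proof.
case: wf2 => _ /andP[t2 _] _ _; rewrite par_relabelE; case: eqP => [->|v0]; first by left.
case: eqP => [->|vt]; first by right.
by case: ltnP => /= *; lia.
Qed.

Lemma wf_ser : wf_ctg (ser c1 c2).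
Proof.
case: (wf1) (wf2) => s1 /andP[t1 t1n] z1 e1 [s2 /andP[t2 t2n] z2 e2].
split => //=; rewrite ?nedges_ser -?snk_ser ?ser_relabelE ?ifN_eq; try lia.
move=> i i_lt; rewrite ends_ser !ser_relabelE; case: ifP => i_lt1.
  by have [] := e1 i i_lt1; rewrite /=; split; case: eqP => _; lia.
by have [] := e2 (i - nedges c1) ltac:(lia); rewrite /=; lia.
Qed.

Lemma wf_par : wf_ctg (par c1 c2).
Proof.
case: (wf1) (wf2) => s1 /andP[t1 t1n] z1 e1 [s2 /andP[t2 t2n] z2 e2].
split => //=; rewrite ?nedges_par; try lia.
move=> i i_lt; rewrite ends_par // !par_relabelE; case: ifP => i_lt1.
  by have [] := e1 i i_lt1; rewrite /=; lia.
have [] := e2 (i - nedges c1) ltac:(lia).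
set x := (ends c2 _).1; set y := (ends c2 _).2 => x_lt y_lt.
by rewrite /=; split; do 2 (case: eqP => ?; first lia); case: ltnP => /= ?; lia.
Qed.

End Relabel.

Lemma wf_sp_interp T : wf_ctg (sp_interp T).
Proof.
elim: T => [|A wfA B wfB|A wfA B wfB] /=; last exact: wf_par; last exact: wf_ser.
by split => // -[].
Qed.

Definition joins c j x y := ends c j = (x, y) \/ ends c j = (y, x).

Lemma joins_sym c j x y : joins c j x y -> joins c j y x.
Proof. by case; [right|left]. Qed.

(* A walk [v 0, e 0, v 1, ..., e (k-1), v k] through [k] distinct edges. *)
Definition trail c k (v e : nat -> nat) :=
  [/\ forall i, i <= k -> v i < nv c,
      forall i, i < k -> e i < nedges c /\ joins c (e i) (v i) (v i.+1) &
      forall i j, i < k -> j < k -> e i = e j -> i = j].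

Definition cpath c a b k v e :=
  [/\ trail c k v e, v 0 = a, v k = b &
      forall i j, i <= k -> j <= k -> v i = v j -> i = j].

Definition ccycle c m v e :=
  [/\ trail c m v e, 1 < m, v m = v 0 &
      forall i j, i < m -> j < m -> v i = v j -> i = j].

Definition cembed c' c (f h : nat -> nat) :=
  [/\ forall x, x < nv c' -> f x < nv c,
      forall x y, x < nv c' -> y < nv c' -> f x = f y -> x = y,
      injective h &
      forall i, i < nedges c' ->
        h i < nedges c /\ ends c (h i) = (f (ends c' i).1, f (ends c' i).2)].

Section Embedding.
Variables (c' c : ctg) (f h : nat -> nat).
Hypothesis emb : cembed c' c f h.

Lemma trail_embed k v e : trail c' k v e -> trail c k (fun i => f (v i)) (fun i => h (e i)).
Proof.
case: emb => fV _ hinj hE [vV eE einj]; split.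
- by move=> i ik; apply/fV/vV.
- move=> i ik; have [ei J] := eE i ik; have [hi E] := hE _ ei.
  by split => //; rewrite /joins E; case: J => ->; [left|right].
- by move=> i j ik jk /hinj; apply: einj.
Qed.

Lemma cpath_embed a b k v e : cpath c' a b k v e ->
  cpath c (f a) (f b) k (fun i => f (v i)) (fun i => h (e i)).
Proof.
case=> tr <- <- vinj; split; [exact: trail_embed| | |] => //.
case: emb tr => _ finj _ _ [vV _ _] i j ik jk /finj fij.
by apply: vinj => //; apply: fij; apply: vV.
Qed.

Lemma ccycle_embed m v e : ccycle c' m v e -> ccycle c m (fun i => f (v i)) (fun i => h (e i)).
Proof.
case=> tr m_gt1 vm vinj; split; [exact: trail_embed| |by rewrite vm|] => //.
case: emb tr => _ finj _ _ [vV _ _] i j im jm /finj fij.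
by apply: vinj => //; apply: fij; apply: vV; lia.
Qed.

End Embedding.

Section SubgraphsOfCompositions.
Variables c1 c2 : ctg.
Hypotheses (wf1 : wf_ctg c1) (wf2 : wf_ctg c2).

Lemma cembed_ser_l : cembed c1 (ser c1 c2) (ser_relabel c1 c2) id.
Proof.
case: (wf1) (wf2) => _ _ _ e1 [_ /andP[_ t2n] _ _].
split => //.
- by move=> x x_lt; rewrite ser_relabelE //=; case: eqP => _; lia.
- by move=> x y _ _; rewrite !ser_relabelE //; do 2 case: eqP => ?; lia.
- by move=> i i_lt; rewrite nedges_ser ends_ser i_lt; split => //; lia.
Qed.

Lemma cembed_ser_r : cembed c2 (ser c1 c2) id (addn^~ (nedges c1)).
Proof.
case: wf1 wf2 => _ /andP[_ t1n] _ _ [_ _ _ e2]; split => //.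
- by move=> x x_lt /=; lia.
- by move=> i j /= /eqP; rewrite eqn_add2r => /eqP.
- move=> i i_lt; rewrite nedges_ser ends_ser ifN; last by lia.
  by rewrite addnK; split; [lia|case: (ends c2 i)].
Qed.

Lemma cembed_par_l : cembed c1 (par c1 c2) id id.
Proof.
case: wf1 wf2 => _ _ _ e1 [_ /andP[t2 t2n] _ _]; split => //.
- by move=> x x_lt /=; lia.
- move=> i i_lt; rewrite nedges_par ends_par ?i_lt; last by lia.
  by split; [lia|case: (ends c1 i)].
Qed.

Lemma cembed_par_r : cembed c2 (par c1 c2) (par_relabel c1 c2) (addn^~ (nedges c1)).
Proof.
case: (wf1) (wf2) => _ /andP[t1 t1n] _ _ [_ /andP[t2 t2n] _ e2]; split.
- move=> x x_lt; rewrite par_relabelE //=.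
  by do 2 (case: eqP => ?; first lia); case: ltnP => /= ?; lia.
- move=> x y x_lt y_lt; rewrite !par_relabelE //.
  by do 2 (case: eqP => ?; [|case: eqP => ?]); lia.
- by move=> i j /= /eqP; rewrite eqn_add2r => /eqP.
- move=> i i_lt; rewrite nedges_par ends_par; last by lia.
  by rewrite ifN ?addnK; [split => //; lia|lia].
Qed.

End SubgraphsOfCompositions.

Definition vcat k (v1 v2 : nat -> nat) i := if i <= k then v1 i else v2 (i - k).
Definition ecat k (e1 e2 : nat -> nat) i := if i < k then e1 i else e2 (i - k).

Lemma ecat_l k e1 e2 j : (j < k) -> ecat k e1 e2 j = e1 j.
Proof. by rewrite /ecat => ->. Qed.

Lemma ecat_r k e1 e2 j : ecat k e1 e2 (j + k) = e2 j.
Proof. by rewrite /ecat ifN ?addnK //; lia. Qed.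


Lemma cpath_rev c a b k v e : cpath c a b k v e ->
  cpath c b a k (fun i => v (k - i)) (fun i => e (k.-1 - i)).
Proof.
case=> -[vV eE einj] va vb vinj; split; rewrite ?subn0 ?subnn //.
- split.
  + by move=> i ik; apply: vV; lia.
  + move=> i ik; have [ei J] := eE (k.-1 - i) ltac:(lia).
    have -> : k - i.+1 = k.-1 - i by lia.
    have kk : (k.-1 - i).+1 = k - i by lia.
    by rewrite kk in J; split => //; exact: joins_sym.
  + by move=> i j ik jk /einj; lia.
- by move=> i j ik jk /vinj; lia.
Qed.

Section Concatenation.
Variables (c : ctg) (k1 k2 : nat) (v1 e1 v2 e2 : nat -> nat).
Hypothesis disjoint_edges : forall i j, i < k1 -> j < k2 -> e1 i <> e2 j.

Lemma trail_cat : trail c k1 v1 e1 -> trail c k2 v2 e2 -> v1 k1 = v2 0 ->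
  trail c (k1 + k2) (vcat k1 v1 v2) (ecat k1 e1 e2).
Proof.
move=> [vV1 eE1 einj1] [vV2 eE2 einj2] junction; rewrite /vcat /ecat; split.
- by move=> i ik; case: ifP => ?; [apply: vV1|apply: vV2]; lia.
- move=> i ik; case: (ltnP i k1) => ik1.
    by rewrite (ltnW ik1); apply: eE1.
  have [ei J] := eE2 (i - k1) ltac:(lia).
  case: (leqP i k1) => ?; last by rewrite subSn.
  have ik1e : i = k1 by lia.
  by rewrite ik1e subnn subSnn junction; rewrite ik1e subnn in J ei.
- move=> i j ik jk; case: (ltnP i k1) => ?; case: (ltnP j k1) => ?.
  + exact: einj1.
  + by move/disjoint_edges; lia.
  + by move/esym/disjoint_edges; lia.
  + by move/einj2; lia.
Qed.

Hypothesis meet : forall i j, i <= k1 -> j <= k2 -> v1 i = v2 j ->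
  (i = k1 /\ j = 0) \/ (i = 0 /\ j = k2).

Lemma vcat_inj a b d : cpath c a b k1 v1 e1 -> cpath c b d k2 v2 e2 ->
  forall i j, i <= k1 + k2 -> j <= k1 + k2 -> vcat k1 v1 v2 i = vcat k1 v1 v2 j ->
  i = j \/ (i = 0 /\ j = k1 + k2) \/ (i = k1 + k2 /\ j = 0).
Proof.
move=> [_ _ _ vinj1] [_ _ _ vinj2] i j ik jk; rewrite /vcat.
case: (leqP i k1) => ?; case: (leqP j k1) => ?.
- by move/vinj1; lia.
- by move/meet; lia.
- by move/esym/meet; lia.
- by move/vinj2; lia.
Qed.

Lemma vcat_ends a b d : cpath c a b k1 v1 e1 -> cpath c b d k2 v2 e2 ->
  vcat k1 v1 v2 0 = a /\ vcat k1 v1 v2 (k1 + k2) = d.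
Proof.
move=> [_ va vb _] [_ vb' vd _]; rewrite /vcat leq0n addKn; split => //.
case: leqP => // k_le; have k2_0 : k2 = 0 by lia.
by rewrite k2_0 addn0 vb -vb' -vd k2_0.
Qed.

Lemma cpath_cat a b d : cpath c a b k1 v1 e1 -> cpath c b d k2 v2 e2 -> a <> d ->
  cpath c a d (k1 + k2) (vcat k1 v1 v2) (ecat k1 e1 e2).
Proof.
move=> p1 p2 ad; have [v0 vk] := vcat_ends p1 p2; have vinj := vcat_inj p1 p2.
case: p1 p2 => tr1 _ vb1 _ [tr2 vb2 _ _].
split => //; first exact: trail_cat tr1 tr2 (etrans vb1 (esym vb2)).
move=> i j ik jk vij; case: (vinj i j ik jk vij) => [//|[] [? ?]]; subst i j.
all: by case: ad; rewrite -v0 -vk.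
Qed.

Lemma ccycle_cat a b : cpath c a b k1 v1 e1 -> cpath c b a k2 v2 e2 -> 1 < k1 + k2 ->
  ccycle c (k1 + k2) (vcat k1 v1 v2) (ecat k1 e1 e2).
Proof.
move=> p1 p2 m_gt1; have [v0 vk] := vcat_ends p1 p2; have vinj := vcat_inj p1 p2.
case: p1 p2 => tr1 _ vb1 _ [tr2 vb2 _ _].
split => //; first exact: trail_cat tr1 tr2 (etrans vb1 (esym vb2)).
- by rewrite v0 vk.
- by move=> i j ik jk vij; case: (vinj i j (ltnW ik) (ltnW jk) vij) => [//|]; lia.
Qed.

End Concatenation.

Lemma cpath_length_pos c a b k v e : cpath c a b k v e -> a <> b -> 0 < k.
Proof. by case: k => [[_ <- <-]|]. Qed.

Section PathsThroughCompositions.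
Variables (c1 c2 : ctg) (k1 k2 : nat) (v1 e1 v2 e2 : nat -> nat).
Hypotheses (wf1 : wf_ctg c1) (wf2 : wf_ctg c2).
Hypotheses (p1 : cpath c1 0 (snk c1) k1 v1 e1) (p2 : cpath c2 0 (snk c2) k2 v2 e2).

Lemma cpath_ser : cpath (ser c1 c2) 0 (snk (ser c1 c2)) (k2 + k1)
  (vcat k2 v2 (fun i => ser_relabel c1 c2 (v1 i))) (ecat k2 (fun i => e2 i + nedges c1) e1).
Proof.
have q1 := cpath_embed (cembed_ser_l wf1 wf2) p1; rewrite ser_relabel_src // in q1.
have q2 := cpath_embed (cembed_ser_r wf1 wf2) p2.
case: p1 p2 => -[_ eE1 _] v10 _ vinj1 [[vV2 _ _] _ v2k vinj2].
apply: cpath_cat q2 q1 _.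
- by move=> i j _ jk; have [] := eE1 j jk; lia.
- move=> i j ik jk /esym vij; left.
  have v1j : v1 j = 0 by apply: (ser_relabel_lt (c2 := c2) wf1); rewrite vij; apply: vV2.
  have j0 : j = 0 by apply: vinj1; rewrite ?v10.
  by split => //; apply: vinj2; rewrite // v2k -vij v1j ser_relabel_src.
- by rewrite ser_relabelE //; case: wf1 wf2 => _ /andP[t1 _] _ _ [_ /andP[t2 t2n] _ _]; case: eqP; lia.
Qed.

Lemma cpath_par_l : cpath (par c1 c2) 0 (snk (par c1 c2)) k1 v1 e1.
Proof. by have := cpath_embed (cembed_par_l wf1 wf2) p1. Qed.

Lemma cpath_par_r : cpath (par c1 c2) 0 (snk (par c1 c2)) k2
  (fun i => par_relabel c1 c2 (v2 i)) (fun i => e2 i + nedges c1).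
Proof.
have := cpath_embed (cembed_par_r wf1 wf2) p2.
by rewrite par_relabel_src // par_relabel_snk.
Qed.

Lemma ccycle_par : ccycle (par c1 c2) (k1 + k2)
  (vcat k1 v1 (fun i => par_relabel c1 c2 (v2 (k2 - i))))
  (ecat k1 e1 (fun i => e2 (k2.-1 - i) + nedges c1)).
Proof.
have q2 := cpath_rev cpath_par_r.
have [_ /andP[t1 _] _ _] := wf1; have [_ /andP[t2 _] _ _] := wf2.
have k1_gt0 := cpath_length_pos p1 ltac:(lia).
have k2_gt0 := cpath_length_pos p2 ltac:(lia).
case: p1 p2 => -[vV1 eE1 _] v10 v1k vinj1 [[vV2 _ _] v20 v2k vinj2].
apply: (ccycle_cat _ _ cpath_par_l q2); last by lia.
- by move=> i j ik _; have [] := eE1 i ik; lia.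
- move=> i j ik jk vij.
  have [|[w0 f0]|[wt ft]] := par_relabel_lt wf1 wf2 (vV2 (k2 - j) ltac:(lia)).
  + by rewrite -vij; apply: vV1.
  + right; split; first by apply: vinj1; rewrite // v10 vij.
    by have := vinj2 (k2 - j) 0 ltac:(lia) ltac:(lia); rewrite v20 w0; lia.
  + left; split; first by apply: vinj1; rewrite // v1k vij.
    by have := vinj2 (k2 - j) k2 ltac:(lia) ltac:(lia); rewrite v2k wt; lia.
Qed.

End PathsThroughCompositions.

Section Realisation.
Local Open Scope R_scope.

Definition shiftl (L : nat -> R) k i := L (i + k)%N.

Definition nonnegative (L : nat -> R) := forall i, 0 <= L i.

Lemma nonnegative_shiftl L k : nonnegative L -> nonnegative (shiftl L k).
Proof. by move=> L_ge0 i; apply: L_ge0. Qed.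

(* [dmin T L] and [dmax T L] are the least and the greatest distance between the
   terminals in a realisation of the TTSP linkage [T] with edge lengths [L]
   (edges numbered as in [sp_interp T]); [feasible T L] says that one exists. *)
Fixpoint dmax T L : R :=
  match T with
  | SPedge => L 0%N
  | SPser A B => dmax A L + dmax B (shiftl L (nedges (sp_interp A)))
  | SPpar A B => Rmin (dmax A L) (dmax B (shiftl L (nedges (sp_interp A))))
  end.

Fixpoint dmin T L : R :=
  match T with
  | SPedge => L 0%N
  | SPser A B => let L2 := shiftl L (nedges (sp_interp A)) in
      Rmax 0 (Rmax (dmin A L - dmax B L2) (dmin B L2 - dmax A L))
  | SPpar A B => Rmax (dmin A L) (dmin B (shiftl L (nedges (sp_interp A))))
  end.

Fixpoint feasible T L : Prop :=
  match T with
  | SPedge => True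
  | SPser A B => feasible A L /\ feasible B (shiftl L (nedges (sp_interp A)))
  | SPpar A B => let L2 := shiftl L (nedges (sp_interp A)) in
      [/\ feasible A L, feasible B L2, dmin A L <= dmax B L2 & dmin B L2 <= dmax A L]
  end.

Lemma dmin_dmax_ge0 T L : nonnegative L -> 0 <= dmin T L /\ 0 <= dmax T L.
Proof.
elim: T L => [|A IHA B IHB|A IHA B IHB] L L_ge0 /=; first by split; apply: L_ge0.
all: have [lA hA] := IHA L L_ge0; have [lB hB] := IHB _ (nonnegative_shiftl (nedges (sp_interp A)) L_ge0).
- by split; [apply: Rmax_l|lra].
- by split; [apply: Rle_trans lA (Rmax_l _ _)|apply: Rmin_glb].
Qed.

Lemma dmin_le_dmax T L : nonnegative L -> feasible T L -> dmin T L <= dmax T L.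
Proof.
elim: T L => [|A IHA B IHB|A IHA B IHB] L L_ge0 /=; first by lra.
- move=> [fA fB]; have L2_ge0 := nonnegative_shiftl (nedges (sp_interp A)) L_ge0.
  have := IHA L L_ge0 fA; have := IHB _ L2_ge0 fB.
  have [_ hA] := dmin_dmax_ge0 A L_ge0; have [_ hB] := dmin_dmax_ge0 B L2_ge0.
  by rewrite /Rmax; repeat case: Rle_dec; lra.
- move=> [fA fB cAB cBA]; have L2_ge0 := nonnegative_shiftl (nedges (sp_interp A)) L_ge0.
  have := IHA L L_ge0 fA; have := IHB _ L2_ge0 fB.
  by rewrite /Rmax /Rmin; repeat case: Rle_dec; lra.
Qed.

Lemma series_triangle lo1 hi1 lo2 hi2 d :
  0 <= lo1 <= hi1 -> 0 <= lo2 <= hi2 ->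
  Rmax 0 (Rmax (lo1 - hi2) (lo2 - hi1)) <= d <= hi1 + hi2 ->
  exists d1 d2, [/\ lo1 <= d1 <= hi1, lo2 <= d2 <= hi2,
                    d1 <= d2 + d, d2 <= d1 + d & d <= d1 + d2].
Proof.
move=> h1 h2 [hd_lo hd_hi].
have d_ge0 := Rle_trans _ _ _ (Rmax_l _ _) hd_lo.
have d_ge := Rle_trans _ _ _ (Rmax_r _ _) hd_lo.
have d_ge1 := Rle_trans _ _ _ (Rmax_l _ _) d_ge; have d_ge2 := Rle_trans _ _ _ (Rmax_r _ _) d_ge.
case: (Rle_dec (hi2 + d) hi1) => c1.
  exists (Rmax lo1 (hi2 + d)), hi2.
  have := Rmax_l lo1 (hi2 + d); have := Rmax_r lo1 (hi2 + d).
  have := Rmax_lub lo1 (hi2 + d) (hi2 + d) ltac:(lra) (Rle_refl _).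
  by move=> *; split; lra.
case: (Rle_dec (hi1 + d) hi2) => c2.
  exists hi1, (Rmax lo2 (hi1 + d)).
  have := Rmax_l lo2 (hi1 + d); have := Rmax_r lo2 (hi1 + d).
  have := Rmax_lub lo2 (hi1 + d) (hi1 + d) ltac:(lra) (Rle_refl _).
  by move=> *; split; lra.
by exists hi1, hi2; split; lra.
Qed.

Definition realises c (L : nat -> R) (q : nat -> R2) :=
  forall i, (i < nedges c)%N -> dist2 (q (ends c i).1) (q (ends c i).2) = L i.

Lemma realises_isometry c L q f : isometry f -> realises c L q -> realises c L (fun v => f (q v)).
Proof. by move=> iso_f qL i i_lt; rewrite iso_f qL. Qed.

Section Gluing.
Variables (c1 c2 : ctg) (L : nat -> R) (q1 q2 : nat -> R2).
Hypotheses (wf1 : wf_ctg c1) (wf2 : wf_ctg c2).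
Hypotheses (r1 : realises c1 L q1) (r2 : realises c2 (shiftl L (nedges c1)) q2).

(* Placements of the vertices of [ser c1 c2] and [par c1 c2], inverting the relabellings. *)
Definition ser_glue v := if (v < nv c2)%N then q2 v else q1 (v - nv c2 + 1).
Definition par_glue v := if (v < nv c1)%N then q1 v
  else q2 (if (v - nv c1 + 1 < snk c2)%N then (v - nv c1 + 1)%N else (v - nv c1 + 2)%N).

Lemma realises_ser : q1 0%N = q2 (snk c2) ->
  [/\ realises (ser c1 c2) L ser_glue, ser_glue 0%N = q2 0%N
    & ser_glue (snk (ser c1 c2)) = q1 (snk c1)].
Proof.
case: wf1 wf2 => s1 /andP[t1 t1n] _ e1 [_ /andP[t2 t2n] _ e2] junction.
have glue_relabel v : (v < nv c1)%N -> ser_glue (ser_relabel c1 c2 v) = q1 v.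
{ move=> v_lt; rewrite ser_relabelE // /ser_glue; case: eqP => [->|v0]; first by rewrite t2n.
  by rewrite ifN; [congr q1|]; lia. }
split; last by rewrite snk_ser glue_relabel.
- move=> i; rewrite nedges_ser => i_lt; rewrite ends_ser; case: ifP => i_lt1 /=.
    by have [] := e1 i i_lt1; move=> *; rewrite !glue_relabel //; apply: r1.
  have [a1 a2] := e2 (i - nedges c1)%N ltac:(lia).
  by rewrite /ser_glue a1 a2 r2 /shiftl ?subnK //; lia.
- by rewrite /ser_glue ifT //; lia.
Qed.

Lemma realises_par : q1 0%N = q2 0%N -> q1 (snk c1) = q2 (snk c2) ->
  [/\ realises (par c1 c2) L par_glue, par_glue 0%N = q1 0%N
    & par_glue (snk (par c1 c2)) = q1 (snk c1)].
Proof.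
case: wf1 wf2 => s1 /andP[t1 t1n] _ e1 [s2 /andP[t2 t2n] _ e2] src_eq snk_eq.
have glue_relabel v : (v < nv c2)%N -> par_glue (par_relabel c1 c2 v) = q2 v.
{ move=> v_lt; rewrite par_relabelE // /par_glue; case: eqP => [->|v0].
    by rewrite ifT //; lia.
  case: eqP => [->|vt]; first by rewrite ifT //; lia.
  rewrite ifN; last by case: ltnP => /= ?; lia.
  by case: (ltnP (snk c2) v) => /= ?; [rewrite ifN|rewrite ifT]; try congr q2; lia. }
split.
- move=> i; rewrite nedges_par => i_lt; rewrite ends_par //; case: ifP => i_lt1 /=.
    by have [a1 a2] := e1 i i_lt1; rewrite /par_glue a1 a2; apply: r1.
  have [a1 a2] := e2 (i - nedges c1)%N ltac:(lia).
  by rewrite !glue_relabel // r2 /shiftl ?subnK //; lia.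
- by rewrite /par_glue ifT //; lia.
- by rewrite /par_glue ifT //; lia.
Qed.

End Gluing.

Definition spans T L := forall d, dmin T L <= d <= dmax T L ->
  exists q, realises (sp_interp T) L q /\ dist2 (q 0%N) (q (snk (sp_interp T))) = d.

Section SpansCompositions.
Variables (A B : spterm) (L : nat -> R).
Let L2 := shiftl L (nedges (sp_interp A)).
Hypotheses (L_ge0 : nonnegative L) (fA : feasible A L) (fB : feasible B L2).
Hypotheses (sA : spans A L) (sB : spans B L2).

Lemma spans_ser : spans (SPser A B) L.
Proof.
move=> d; rewrite /= -/L2 => hd.
have L2_ge0 : nonnegative L2 := nonnegative_shiftl _ L_ge0.
have [lA hA] := dmin_dmax_ge0 A L_ge0; have [lB hB] := dmin_dmax_ge0 B L2_ge0.
have [d1 [d2 [hd1 hd2 t1 t2 t3]]] :=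
  series_triangle (conj lA (dmin_le_dmax L_ge0 fA)) (conj lB (dmin_le_dmax L2_ge0 fB)) hd.
have d_ge0 : 0 <= d by case: hd => /(Rle_trans _ _ _ (Rmax_l _ _)).
have [q1 [r1 E1]] := sA hd1; have [q2 [r2 E2]] := sB hd2.
(* Place the two parts along the sides of a triangle with base [(0,0)]--[(d,0)]. *)
have [Y [Y1 Y2]] := triangle_apex (a := d1) (b := d2) (c := d) ltac:(lra) ltac:(lra) d_ge0 t1 t2 t3.
have [f2 [iso2 [f2_src f2_snk]]] := isometry_of_eq_dist (etrans E2 (esym Y1)).
have [f1 [iso1 [f1_src f1_snk]]] := isometry_of_eq_dist (etrans E1 (esym Y2)).
have [r glue_src glue_snk] := realises_ser (wf_sp_interp A) (wf_sp_interp B)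
  (realises_isometry iso1 r1) (realises_isometry iso2 r2) ltac:(by rewrite /= f1_src f2_snk).
by eexists; split; [exact: r|rewrite glue_src glue_snk f2_src f1_snk dist2_on_axis].
Qed.

Lemma spans_par : spans (SPpar A B) L.
Proof.
move=> d; rewrite /= -/L2 => hd.
have hd1 : dmin A L <= d <= dmax A L.
{ have := Rmax_l (dmin A L) (dmin B L2); have := Rmin_l (dmax A L) (dmax B L2); lra. }
have hd2 : dmin B L2 <= d <= dmax B L2.
{ have := Rmax_r (dmin A L) (dmin B L2); have := Rmin_r (dmax A L) (dmax B L2); lra. }
have [q1 [r1 E1]] := sA hd1; have [q2 [r2 E2]] := sB hd2.
have [f [iso_f [f_src f_snk]]] := isometry_of_eq_dist (etrans E2 (esym E1)).
have [r glue_src glue_snk] := realises_par (wf_sp_interp A) (wf_sp_interp B)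
  r1 (realises_isometry iso_f r2) (esym f_src) (esym f_snk).
by eexists; split; [exact: r|rewrite glue_src glue_snk].
Qed.

End SpansCompositions.

Lemma feasible_spans T L : nonnegative L -> feasible T L -> spans T L.
Proof.
elim: T L => [|A IHA B IHB|A IHA B IHB] L L_ge0 /=.
- move=> _ d /= hd; have -> : d = L 0%N by lra.
  exists (fun v => if v == 0%N then (0, 0) else (L 0%N, 0)).
  rewrite /= dist2_on_axis //; split => // i; rewrite /nedges /= => /[!ltnS] /[!leqn0] /eqP ->.
  by rewrite /ends /= dist2_on_axis.
- move=> [fA fB]; have L2_ge0 := nonnegative_shiftl (nedges (sp_interp A)) L_ge0.
  exact: spans_ser (IHA _ L_ge0 fA) (IHB _ L2_ge0 fB).
- move=> [fA fB _ _]; have L2_ge0 := nonnegative_shiftl (nedges (sp_interp A)) L_ge0.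
  exact: spans_par (IHA _ L_ge0 fA) (IHB _ L2_ge0 fB).
Qed.

End Realisation.

Section Obstruction.
Local Open Scope R_scope.

Lemma rsum_ecat (L : nat -> R) k r e1 e2 :
  rsum (fun i => L (ecat k e1 e2 i)) (k + r) = rsum (fun i => L (e1 i)) k + rsum (fun i => L (e2 i)) r.
Proof.
rewrite rsum_add /ecat; congr (_ + _); apply: eq_rsum => i ik; first by rewrite ik.
by rewrite ifN ?addnK //; lia.
Qed.

Definition overlong_cycle c (L : nat -> R) := exists m v e j,
  [/\ ccycle c m v e, (j < m)%N & rsum (fun i => L (e i)) m < 2 * L (e j)].

Lemma overlong_cycle_embed c' c f h L : cembed c' c f h ->
  overlong_cycle c' (fun i => L (h i)) -> overlong_cycle c L.
Proof.
move=> emb [m [v [e [j [cyc jm long]]]]].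
exists m, (fun i => f (v i)), (fun i => h (e i)), j.
by split => //; exact (ccycle_embed emb cyc).
Qed.

Lemma cpath_K2 : cpath K2 0 1 1 id (fun=> 0%N).
Proof.
split => //.
split => [i|[|//] _|i j]; [rewrite /=; lia|by split => //; left|lia].
Qed.

Lemma short_path T L : exists k v e, cpath (sp_interp T) 0 (snk (sp_interp T)) k v e /\
  rsum (fun i => L (e i)) k <= dmax T L.
Proof.
elim: T L => [|A IHA B IHB|A IHA B IHB] L.
- by exists 1%N, id, (fun=> 0%N); split; [exact: cpath_K2|rewrite /=; lra].
- have [k1 [v1 [e1 [p1 s1]]]] := IHA L.
  have [k2 [v2 [e2 [p2 s2]]]] := IHB (shiftl L (nedges (sp_interp A))).
  do 3 eexists; split; first exact: cpath_ser (wf_sp_interp A) (wf_sp_interp B) p1 p2.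
  by rewrite rsum_ecat Rplus_comm; apply: Rplus_le_compat s1 s2.
- have [k1 [v1 [e1 [p1 s1]]]] := IHA L.
  have [k2 [v2 [e2 [p2 s2]]]] := IHB (shiftl L (nedges (sp_interp A))).
  rewrite /=; case: (Rle_dec (dmax A L) (dmax B (shiftl L (nedges (sp_interp A))))) => Hc.
  + do 3 eexists; split; first exact: cpath_par_l (wf_sp_interp A) (wf_sp_interp B) p1.
    by rewrite Rmin_left.
  + do 3 eexists; split; first exact: cpath_par_r (wf_sp_interp A) (wf_sp_interp B) p2.
    by rewrite Rmin_right /=; [|lra].
Qed.

Definition long_edge_path T L d := exists k v e j,
  [/\ cpath (sp_interp T) 0 (snk (sp_interp T)) k v e, (j < k)%N &
      d <= 2 * L (e j) - rsum (fun i => L (e i)) k].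

Section LongEdgePathSer.
Variables (A B : spterm) (L : nat -> R).
Let L2 := shiftl L (nedges (sp_interp A)).

Lemma long_edge_path_ser_l :
  long_edge_path A L (dmin A L) -> long_edge_path (SPser A B) L (dmin A L - dmax B L2).
Proof.
move=> [k1 [v1 [e1 [j [p1 jk1 long]]]]]; have [k2 [v2 [e2 [p2 s2]]]] := short_path B L2.
exists (k2 + k1)%N, (vcat k2 v2 (fun i => ser_relabel (sp_interp A) (sp_interp B) (v1 i))).
exists (ecat k2 (fun i => e2 i + nedges (sp_interp A))%N e1), (j + k2)%N.
split; [exact: cpath_ser (wf_sp_interp A) (wf_sp_interp B) p1 p2|lia|].
by rewrite ecat_r rsum_ecat; rewrite /L2 /shiftl in s2 *; lra.
Qed.

Lemma long_edge_path_ser_r :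
  long_edge_path B L2 (dmin B L2) -> long_edge_path (SPser A B) L (dmin B L2 - dmax A L).
Proof.
move=> [k2 [v2 [e2 [j [p2 jk2 long]]]]]; have [k1 [v1 [e1 [p1 s1]]]] := short_path A L.
exists (k2 + k1)%N, (vcat k2 v2 (fun i => ser_relabel (sp_interp A) (sp_interp B) (v1 i))).
exists (ecat k2 (fun i => e2 i + nedges (sp_interp A))%N e1), j.
split; [exact: cpath_ser (wf_sp_interp A) (wf_sp_interp B) p1 p2|lia|].
by rewrite ecat_l // rsum_ecat; rewrite /L2 /shiftl in long *; lra.
Qed.

End LongEdgePathSer.

Lemma Rmax0_gt0 x : 0 < Rmax 0 x -> Rmax 0 x = x /\ 0 < x.
Proof.
case: (Rle_dec x 0) => x0; first by rewrite Rmax_left //; lra.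
by rewrite Rmax_right; lra.
Qed.

Lemma dmin_long_edge_path T L : nonnegative L -> 0 < dmin T L -> long_edge_path T L (dmin T L).
Proof.
elim: T L => [|A IHA B IHB|A IHA B IHB] L L_ge0 dmin_gt0.
- by exists 1%N, id, (fun=> 0%N), 0%N; split; [exact: cpath_K2|by []|rewrite /=; lra].
- set L2 := shiftl L (nedges (sp_interp A)) in IHB *.
  have L2_ge0 : nonnegative L2 := nonnegative_shiftl _ L_ge0.
  have [_ hA] := dmin_dmax_ge0 A L_ge0; have [_ hB] := dmin_dmax_ge0 B L2_ge0.
  move: dmin_gt0; rewrite /= -/L2 => /Rmax0_gt0 [-> pos].
  case: (Rle_dec (dmin B L2 - dmax A L) (dmin A L - dmax B L2)) => c.
  + rewrite Rmax_left // in pos *.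
    by apply: long_edge_path_ser_l; apply: IHA L_ge0 _; lra.
  + rewrite Rmax_right in pos *; last by lra.
    by apply: long_edge_path_ser_r; apply: IHB L2_ge0 _; lra.
- set L2 := shiftl L (nedges (sp_interp A)) in IHB *.
  have wfA := wf_sp_interp A; have wfB := wf_sp_interp B.
  move: dmin_gt0; rewrite /= -/L2.
  case: (Rle_dec (dmin B L2) (dmin A L)) => c.
  + rewrite Rmax_left // => /(IHA L L_ge0) [k [v [e [j [p jk long]]]]].
    by exists k, v, e, j; split => //; exact: cpath_par_l wfA wfB p.
  + rewrite Rmax_right; last by lra.
    move=> /(IHB L2 (nonnegative_shiftl _ L_ge0)) [k [v [e [j [p jk long]]]]].
    exists k, (fun i => par_relabel (sp_interp A) (sp_interp B) (v i)).
    by exists (fun i => e i + nedges (sp_interp A))%N, j; split => //; exact: cpath_par_r wfA wfB p.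
Qed.

Lemma overlong_cycle_par c1 c2 L k1 v1 e1 k2 v2 e2 :
  wf_ctg c1 -> wf_ctg c2 ->
  cpath c1 0 (snk c1) k1 v1 e1 -> cpath c2 0 (snk c2) k2 v2 e2 ->
  let L2 := shiftl L (nedges c1) in
  let S := rsum (fun i => L (e1 i)) k1 + rsum (fun i => L2 (e2 i)) k2 in
  (exists2 j, (j < k1)%N & S < 2 * L (e1 j)) \/ (exists2 j, (j < k2)%N & S < 2 * L2 (e2 j)) ->
  overlong_cycle (par c1 c2) L.
Proof.
move=> wf1 wf2 p1 p2 L2 S long.
have cyc := ccycle_par wf1 wf2 p1 p2.
have sum_cyc : rsum (fun i => L (ecat k1 e1 (fun i => e2 (k2.-1 - i) + nedges c1)%N i)) (k1 + k2) = S.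
  by rewrite rsum_ecat (rsum_rev (fun i => L (e2 i + nedges c1)%N)).
case: long => [[j jk long]|[j jk long]].
- by do 3 eexists; exists j; split; [exact: cyc|lia|rewrite sum_cyc ecat_l].
- do 3 eexists; exists (k2.-1 - j + k1)%N; split; [exact: cyc|lia|].
  by rewrite sum_cyc ecat_r (_ : k2.-1 - (k2.-1 - j) = j)%N //; lia.
Qed.

Lemma infeasible_overlong_cycle T L : nonnegative L -> ~ feasible T L -> overlong_cycle (sp_interp T) L.
Proof.
elim: T L => [|A IHA B IHB|A IHA B IHB] L L_ge0 infeasible /=; first by case: infeasible.
all: set L2 := shiftl L (nedges (sp_interp A)) in infeasible *.
all: have L2_ge0 : nonnegative L2 := nonnegative_shiftl _ L_ge0.
all: have wfA := wf_sp_interp A; have wfB := wf_sp_interp B.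
all: case: (classic (feasible A L)) => fA; [case: (classic (feasible B L2)) => fB|].
- by case: infeasible.
- exact: overlong_cycle_embed (cembed_ser_r wfA wfB) (IHB L2 L2_ge0 fB).
- exact: overlong_cycle_embed (cembed_ser_l wfA wfB) (IHA L L_ge0 fA).
- have [_ hA] := dmin_dmax_ge0 A L_ge0; have [_ hB] := dmin_dmax_ge0 B L2_ge0.
  case: (Rle_dec (dmin A L) (dmax B L2)) => cAB; [have cBA : dmax A L < dmin B L2|].
  + by apply: Rnot_le_lt => cBA; apply: infeasible.
  + have [k2 [v2 [e2 [j [p2 jk long]]]]] := dmin_long_edge_path (T := B) L2_ge0 ltac:(lra).
    have [k1 [v1 [e1 [p1 short]]]] := short_path A L.
    by apply: overlong_cycle_par wfA wfB p1 p2 _; right; exists j; rewrite -/L2 //; lra.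
  + have [k1 [v1 [e1 [j [p1 jk long]]]]] := dmin_long_edge_path (T := A) L_ge0 ltac:(lra).
    have [k2 [v2 [e2 [p2 short]]]] := short_path B L2.
    by apply: overlong_cycle_par wfA wfB p1 p2 _; left; exists j; rewrite -/L2 //; lra.
- exact: overlong_cycle_embed (cembed_par_r wfA wfB) (IHB L2 L2_ge0 fB).
- exact: overlong_cycle_embed (cembed_par_l wfA wfB) (IHA L L_ge0 fA).
Qed.

End Obstruction.

Section Polygons.
Local Open Scope R_scope.
Variables (G : graph) (l : gE G -> R) (n : nat).
Variables (cv : 'I_n.+2 -> gV G) (ce : 'I_n.+2 -> gE G).
Hypotheses (cv_inj : injective cv) (ce_inj : injective ce).
Hypothesis ce_ends : forall i,
  gends (ce i) = (cv i, cv (ordS i)) \/ gends (ce i) = (cv (ordS i), cv i).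

Let VS := cv @: [set: 'I_n.+2].
Let ES := ce @: [set: 'I_n.+2].

Lemma polygon_is_subgraph : is_subgraph VS ES.
Proof.
by move=> g /imsetP[i _ ->]; case: (ce_ends i) => ->; split; apply: imset_f.
Qed.

Let H := subgraph polygon_is_subgraph.
Let hV (i : 'I_n.+2) : gV H := exist _ (cv i) (imset_f cv (in_setT i)).
Let hE (i : 'I_n.+2) : gE H := exist _ (ce i) (imset_f ce (in_setT i)).

Lemma polygon_ends i : gends (hE i) = (hV i, hV (ordS i)) \/ gends (hE i) = (hV (ordS i), hV i).
Proof. by case: (ce_ends i) => E; [left|right]; congr pair; apply: val_inj; rewrite /= E. Qed.

Lemma polygonal_polygon : polygonal H.
Proof.
exists n, hV, hE; split; [|split; last exact: polygon_ends].
- apply: inj_card_bij; first by move=> i j /(congr1 val) /cv_inj.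
  by rewrite card_sig card_imset // cardsT card_ord.
- apply: inj_card_bij; first by move=> i j /(congr1 val) /ce_inj.
  by rewrite card_sig card_imset // cardsT card_ord.
Qed.

Lemma polygon_inequality : realisable (G := H) (fun e => l (sval e)) ->
  forall j : 'I_n.+2, 2 * l (ce j) <= rsum (fun i => l (ce (inord i))) n.+2.
Proof.
move=> [p p_real] j.
pose y k := p (hV (inord (k %% n.+2))).
have y_side i : (i < n.+2)%N -> dist2 (y i) (y i.+1) = l (ce (inord i)).
{ move=> i_lt; rewrite /y (modn_small i_lt).
  have -> : inord (i.+1 %% n.+2) = ordS (inord i) :> 'I_n.+2.
    by apply: val_inj; rewrite /= !inordK ?ltn_pmod.
  rewrite -(p_real (hE (inord i))).
  by case: (polygon_ends (inord i)) => -> //; rewrite dist2_sym. }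
have y_closed : y n.+2 = y 0%N by rewrite /y modnn mod0n.
have := closed_polyline_side y_closed (ltn_ord j).
by rewrite (eq_rsum (g := fun i => l (ce (inord i)))) // y_side // inord_val.
Qed.

End Polygons.

Section Transport.
Local Open Scope R_scope.
Variables (G : graph) (l : gE G -> R) (c : ctg).
Variables (fV : nat -> gV G) (fE : 'I_(nedges c) -> gE G).
Hypotheses (wf_c : wf_ctg c) (fE_bij : bijective fE).
Hypothesis fV_inj : forall k1 k2, (k1 < nv c)%N -> (k2 < nv c)%N -> fV k1 = fV k2 -> k1 = k2.
Hypothesis fE_ends : forall i : 'I_(nedges c),
  gends (fE i) = (fV (ends c i).1, fV (ends c i).2) \/
  gends (fE i) = (fV (ends c i).2, fV (ends c i).1).

Definition lengths k := if insub k is Some i then l (fE i) else 0.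

Lemma lengths_ord (i : 'I_(nedges c)) : lengths i = l (fE i).
Proof. by rewrite /lengths valK. Qed.

Lemma nonnegative_lengths : (forall e, 0 <= l e) -> nonnegative lengths.
Proof. by move=> l_ge0 k; rewrite /lengths; case: insub => [i|]; [apply: l_ge0|lra]. Qed.

Lemma realisable_of_realises q : (forall v, exists2 k, (k < nv c)%N & fV k = v) ->
  realises c lengths q -> realisable l.
Proof.
move=> fV_surj q_real.
have fV_ex v : exists k, (k < nv c)%N && (fV k == v).
  by have [k k_lt <-] := fV_surj v; exists k; rewrite k_lt eqxx.
pose kv v := xchoose (fV_ex v).
have kvK k : (k < nv c)%N -> kv (fV k) = k.
  by move=> k_lt; have /andP[kv_lt /eqP kv_eq] := xchooseP (fV_ex (fV k)); apply: fV_inj.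
exists (fun v => q (kv v)) => g.
have [gi fEK fEK'] := fE_bij; rewrite -(fEK' g); set i := gi g.
have [_ _ _ ends_lt] := wf_c; have [a1 a2] := ends_lt i (ltn_ord i).
have := q_real i (ltn_ord i); rewrite lengths_ord.
by case: (fE_ends i) => -> /=; rewrite !kvK // dist2_sym.
Qed.

Lemma overlong_cycle_obstruction : overlong_cycle c lengths ->
  exists VS ES (h : is_subgraph VS ES),
    polygonal (subgraph h) /\ ~ realisable (G := subgraph h) (fun e => l (sval e)).
Proof.
move=> [m [v [e [j [[[vV eE einj] m_gt1 vm vinj] jm long]]]]].
have {m_gt1} [n mE] : exists n, m = n.+2 by exists m.-2; lia.
subst m.
pose cv (i : 'I_n.+2) := fV (v i).
pose ce (i : 'I_n.+2) := fE (Ordinal (proj1 (eE i (ltn_ord i)))).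
have l_ce i : l (ce i) = lengths (e i) by rewrite -lengths_ord.
have cv_inj : injective cv.
  move=> i1 i2 eq12; apply/val_inj/(vinj _ _ (ltn_ord i1) (ltn_ord i2)).
  by apply: (fV_inj _ _ eq12); apply/vV/ltnW.
have ce_inj : injective ce.
  by move=> i1 i2 /(bij_inj fE_bij) /(congr1 val) /= /einj eq12; apply/val_inj/eq12.
have ce_ends i : gends (ce i) = (cv i, cv (ordS i)) \/ gends (ce i) = (cv (ordS i), cv i).
  have v_ordS : v (ordS i) = v i.+1.
    case: (ltnP i.+1 n.+2) => i_lt; first by rewrite /= modn_small.
    have i_le := ltn_ord i.
    by rewrite /= (_ : i.+1 = n.+2) ?modnn ?vm //; lia.
  have [_ J] := eE i (ltn_ord i); rewrite /cv v_ordS.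
  by case: (fE_ends (Ordinal (proj1 (eE i (ltn_ord i))))) => ->; case: J => ->; [left|right|right|left].
exists _, _, (polygon_is_subgraph ce_ends); split; first exact: polygonal_polygon.
move=> /polygon_inequality /(_ (inord j)).
rewrite l_ce inordK // (eq_rsum (g := fun i => lengths (e i))); first by lra.
by move=> i i_lt; rewrite l_ce inordK.
Qed.

End Transport.

Lemma realisable_subgraph (G : graph) (l : gE G -> R) VS ES (h : is_subgraph VS ES) :
  realisable l -> realisable (G := subgraph h) (fun e => l (sval e)).
Proof. by move=> [p p_real]; exists (fun v => p (sval v)) => e; apply: p_real. Qed.

Unset Implicit Arguments.
Theorem mainTheorem5 (G : graph) (l : gE G -> R) :
  loopless G ->
  (forall e : gE G, Rle 0 (l e)) ->
  series_parallel G ->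
  (realisable l <->
   forall (VS : {set gV G}) (ES : {set gE G}) (h : is_subgraph VS ES),
     polygonal (subgraph h) ->
     realisable (G := subgraph h) (fun e => l (sval e))).
Proof.
move=> _ l_ge0 [s [t [_ [T [fV [fE [fV_inj [fV_surj [fE_bij [fE_ends _]]]]]]]]]].
have wfT := wf_sp_interp T.
have L_ge0 := nonnegative_lengths fE l_ge0.
split=> [real VS ES h _|polygons_real]; first exact: realisable_subgraph.
case: (classic (feasible T (lengths l fE))) => [feas|infeas].
- have [q [q_real _]] := feasible_spans L_ge0 feas (conj (Rle_refl _) (dmin_le_dmax L_ge0 feas)).
  exact: realisable_of_realises wfT fE_bij fV_inj fE_ends q fV_surj q_real.
- have [VS [ES [h [poly not_real]]]] :=
    overlong_cycle_obstruction fE_bij fV_inj fE_ends (infeasible_overlong_cycle L_ge0 infeas).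
  by case: not_real; apply: polygons_real.
Qed.
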